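(* Let $(X,\|\cdot\|_X)$ be a Banach space, $\mathcal{K}\subset X$ compact, and $\gamma\ge2\,\mathrm{rad}(\mathcal{K})$. Then $\lim_{n\to\infty}d_n^\gamma(\mathcal{K})_X=0$.
   Context: $\mathrm{rad}(\mathcal{K})=\inf_{g\in X}\sup_{f\in\mathcal{K}}\|f-g\|_X$. For $k\ge1$ and a norm $\|\cdot\|_{Y_k}$ on $\mathbb{R}^k$ let $B_{Y_k}=\{y\in\mathbb{R}^k:\|y\|_{Y_k}\le1\}$. For $\gamma\ge0$, the fixed Lipschitz width is $d^\gamma(\mathcal{K},Y_k)_X=\inf_{\Phi}\sup_{f\in\mathcal{K}}\inf_{y\in B_{Y_k}}\|f-\Phi(y)\|_X$, the infimum over all maps $\Phi:B_{Y_k}\to X$ with $\|\Phi(y)-\Phi(y')\|_X\le\gamma\|y-y'\|_{Y_k}$ for all $y,y'\in B_{Y_k}$. The Lipschitz width is $d_n^\gamma(\mathcal{K})_X=\inf_{1\le k\le n}\inf_{\|\cdot\|_{Y_k}}d^\gamma(\mathcal{K},Y_k)_X$, the inner infimum over all norms on $\mathbb{R}^k$. *)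

From HB Require Import structures.
From mathcomp Require Import all_boot all_order all_algebra.
From mathcomp Require Import all_classical all_reals all_analysis.
Set Implicit Arguments. Unset Strict Implicit. Unset Printing Implicit Defensive.
Import Order.TTheory GRing.Theory Num.Theory.
Import numFieldNormedType.Exports.
Local Open Scope classical_set_scope.
Local Open Scope ring_scope.

(* Real-valued sup/inf of MathComp-Analysis (reals.v).  All sets to which
   they are applied below are nonempty and bounded (K compact, Lipschitz maps
   continuous on compact balls), except possibly when K is empty, where the
   convention sup set0 = 0 gives the natural value 0 for distances. *)

Definition set_rad (R : realType) (X : normedModType R) (K : set X) : R :=
  inf [set sup [set `|f - g| | f in K] | g in [set: X]].

Definition is_norm (R : realType) (k : nat) (N : 'rV[R]_k -> R) : Prop :=
  [/\ forall x, N x = 0 -> x = 0,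
      forall (a : R) x, N (a *: x) = `|a| * N x &
      forall x y, N (x + y) <= N x + N y].

Definition unit_ball (R : realType) (k : nat) (N : 'rV[R]_k -> R) : set 'rV[R]_k :=
  [set y | N y <= 1].

Definition lip_on_ball (R : realType) (X : normedModType R) (k : nat)
    (N : 'rV[R]_k -> R) (gamma : R) (Phi : 'rV[R]_k -> X) : Prop :=
  forall y y', unit_ball N y -> unit_ball N y' ->
    `|Phi y - Phi y'| <= gamma * N (y - y').

Definition fixed_lip_width (R : realType) (X : normedModType R) (gamma : R)
    (K : set X) (k : nat) (N : 'rV[R]_k -> R) : R :=
  inf [set e | exists Phi : 'rV[R]_k -> X, lip_on_ball N gamma Phi /\
         e = sup [set inf [set `|f - Phi y| | y in unit_ball N] | f in K]].

Definition lip_width (R : realType) (X : normedModType R) (gamma : R)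
    (K : set X) (n : nat) : R :=
  inf [set e | exists (k : nat) (N : 'rV[R]_k -> R),
         (1 <= k <= n)%N /\ is_norm N /\ e = fixed_lip_width gamma K N].

From mathcomp Require Import all_boot all_order all_algebra.
From mathcomp Require Import all_classical all_reals all_analysis.
From mathcomp Require Import finmap.
Set Implicit Arguments.
Unset Strict Implicit.
Import Order.TTheory GRing.Theory Num.Theory.
Import numFieldNormedType.Exports.
Local Open Scope classical_set_scope.
Local Open Scope ring_scope.

(* Given an eps-net p_1, ..., p_k of the compact set K and a point c of K, the
   map y |-> c + sum_i y_i (p_i - c) on the l1 unit ball of R^k hits every p_i
   (at the basis vectors) and is Lipschitz with constant
   max_i |p_i - c| <= diam K <= 2 rad K <= gamma.  Hence d_n^gamma(K) <= eps
   as soon as n >= k. *)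

Section NonnegSupInf.
Variable R : realType.
Implicit Types (E : set R) (x b : R).

Lemma inf_ge0 E : (forall x, E x -> 0 <= x) -> 0 <= inf E.
Proof.
move=> E_ge0; have [->|/set0P E0] := eqVneq E set0; first by rewrite inf0.
exact: lb_le_inf.
Qed.

Lemma sup_ge0 E : (forall x, E x -> 0 <= x) -> 0 <= sup E.
Proof.
move=> E_ge0; have [supE|/sup_out->//] := pselect (has_sup E).
have [[x Ex] ubE] := supE; apply: le_trans (E_ge0 x Ex) _.
exact: ub_le_sup ubE _ Ex.
Qed.

Lemma ge0_inf_le E x : (forall x, E x -> 0 <= x) -> E x -> inf E <= x.
Proof. by move=> E_ge0; apply: ge_inf; exists 0. Qed.

Lemma sup_le_ge0 E b : 0 <= b -> ubound E b -> sup E <= b.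
Proof.
move=> b_ge0 Eb; have [->|/set0P E0] := eqVneq E set0; first by rewrite sup0.
exact: ge_sup.
Qed.

End NonnegSupInf.

Section LipschitzWidth.
Variables (R : realType) (X : normedModType R).
Implicit Types (K : set X) (gamma eps : R).

Lemma set_rad_ge0 K : 0 <= set_rad K.
Proof. by apply: inf_ge0 => _ [g _ <-]; apply: sup_ge0 => _ [f _ <-]. Qed.

Lemma dist_le_2rad K f f' : bounded_set K -> K f -> K f' ->
  `|f - f'| <= 2 * set_rad K.
Proof.
move=> [M [_ KM]] Kf Kf'.
have bounded_dist g : has_ubound [set `|h - g| | h in K].
  exists (M + 1 + `|g|) => _ [h Kh <-].
  apply: le_trans (ler_normB _ _) _.
  by rewrite lerD2r; apply: KM; rewrite ?ltrDl.
rewrite -ler_pdivrMl //; apply: lb_le_inf; first by eexists; exists 0.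
move=> _ [g _ <-]; rewrite ler_pdivrMl // mulr_natl mulr2n.
apply: le_trans (ler_distD g f f') _; rewrite [X in _ + X]distrC.
by apply: lerD; apply: (ub_le_sup (bounded_dist g)); [exists f | exists f'].
Qed.

Lemma fixed_lip_width_ge0 gamma K k (N : 'rV[R]_k -> R) :
  0 <= fixed_lip_width gamma K N.
Proof.
apply: inf_ge0 => _ [Phi [_ ->]]; apply: sup_ge0 => _ [f _ <-].
by apply: inf_ge0 => _ [y _ <-].
Qed.

Lemma lip_width_ge0 gamma K n : 0 <= lip_width gamma K n.
Proof.
by apply: inf_ge0 => _ [k [N [_ [_ ->]]]]; apply: fixed_lip_width_ge0.
Qed.

Lemma lip_width_le_fixed gamma K n k (N : 'rV[R]_k -> R) :
  (1 <= k <= n)%N -> is_norm N ->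
  lip_width gamma K n <= fixed_lip_width gamma K N.
Proof.
move=> kn normN; apply: ge0_inf_le; last by exists k, N.
by move=> _ [k' [N' [_ [_ ->]]]]; apply: fixed_lip_width_ge0.
Qed.

Definition l1_norm {k} (y : 'rV[R]_k) : R := \sum_i `|y 0 i|.

Lemma l1_norm_is_norm k : is_norm (@l1_norm k).
Proof.
split=> [y /eqP|a y|y y'].
- rewrite psumr_eq0 // => /allP y0; apply/matrixP => i j.
  by rewrite (ord1 i) mxE; apply/normr0_eq0/eqP/y0; rewrite mem_index_enum.
- by rewrite /l1_norm mulr_sumr; apply: eq_bigr => i _; rewrite mxE normrM.
- rewrite /l1_norm -big_split /=; apply: ler_sum => i _.
  by rewrite mxE ler_normD.
Qed.

Lemma l1_norm_delta k (j : 'I_k) : l1_norm (delta_mx 0 j) = 1.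
Proof.
rewrite /l1_norm (bigD1 j) //= big1 => [|i ij]; rewrite mxE !eqxx /=.
  by rewrite normr1 addr0.
by rewrite (negbTE ij) normr0.
Qed.

Definition affine_param {k} (c : X) (p : 'I_k -> X) (y : 'rV[R]_k) : X :=
  c + \sum_i y 0 i *: (p i - c).

Lemma affine_param_delta k c (p : 'I_k -> X) j :
  affine_param c p (delta_mx 0 j) = p j.
Proof.
rewrite /affine_param (bigD1 j) //= big1 => [|i ij]; rewrite mxE !eqxx /=.
  by rewrite scale1r addr0 addrC subrK.
by rewrite (negbTE ij) scale0r.
Qed.

Lemma affine_param_lip k gamma c (p : 'I_k -> X) :
  (forall i, `|p i - c| <= gamma) ->
  lip_on_ball (@l1_norm k) gamma (affine_param c p).
Proof.
move=> p_near_c y y' _ _.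
rewrite /affine_param opprD addrACA subrr add0r -sumrB.
apply: le_trans (ler_norm_sum _ _ _) _.
rewrite /l1_norm mulr_sumr; apply: ler_sum => i _.
by rewrite -scalerBl normrZ !mxE mulrC ler_wpM2r.
Qed.

Lemma fixed_lip_width_le gamma K k (N : 'rV[R]_k -> R) (Phi : 'rV[R]_k -> X) :
  lip_on_ball N gamma Phi ->
  fixed_lip_width gamma K N <=
    sup [set inf [set `|f - Phi y| | y in unit_ball N] | f in K].
Proof.
move=> lipPhi; apply: ge0_inf_le; last by exists Phi.
move=> _ [Phi' [_ ->]]; apply: sup_ge0 => _ [f _ <-].
by apply: inf_ge0 => _ [y _ <-].
Qed.

Lemma fixed_lip_width_l1_le gamma K eps k c (p : 'I_k -> X) :
  0 <= eps -> (forall i, `|p i - c| <= gamma) ->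
  (forall f, K f -> exists i, `|f - p i| <= eps) ->
  fixed_lip_width gamma K (@l1_norm k) <= eps.
Proof.
move=> eps_ge0 p_near_c Kp.
apply: le_trans (fixed_lip_width_le K (affine_param_lip p_near_c)) _.
apply: sup_le_ge0 => // _ [f /Kp [i fi] <-].
apply: le_trans fi; rewrite -(affine_param_delta c p i).
apply: ge0_inf_le => [_ [y _ <-] //|]; exists (delta_mx 0 i) => //.
by rewrite /unit_ball /= l1_norm_delta.
Qed.

Lemma compact_finite_net K eps : compact K -> 0 < eps ->
  exists k (p : 'I_k -> X),
    (forall i, K (p i)) /\ (forall f, K f -> exists i, `|f - p i| < eps).
Proof.
move=> cK eps_gt0.
have Kcover : K `<=` cover K (ball ^~ eps).
  by move=> x Kx; exists x => //; apply: ballxx.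
have [D DK KD] : finite_subset_cover K (ball ^~ eps) K.
  move: cK; rewrite compact_cover => /(_ X K _ _ Kcover); apply=> x _.
  exact: ball_open.
pose s := enum_fset D; exists (size s), (fun i => nth 0 s i); split=> [i|f Kf].
  by have := DK _ (mem_nth 0 (ltn_ord i)); rewrite in_setE.
have [x Dx fx] := KD f Kf; have xs : x \in s by [].
exists (Ordinal (etrans (index_mem x s) xs)); rewrite /= nth_index //.
by rewrite distrC; rewrite -ball_normE in fx.
Qed.

Lemma compact_affine_net K gamma eps :
  compact K -> 2 * set_rad K <= gamma -> 0 < eps ->
  exists k c (p : 'I_k -> X), [/\ (0 < k)%N, forall i, `|p i - c| <= gamma &
    forall f, K f -> exists i, `|f - p i| <= eps].
Proof.
move=> cK rad_gamma eps_gt0.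
have [->|/set0P [c Kc]] := eqVneq K set0.
  exists 1%N, 0, (fun=> 0); split=> // _.
  rewrite subrr normr0; apply: le_trans rad_gamma.
  by rewrite mulr_ge0 ?set_rad_ge0.
have [k [p [Kp pK]]] := compact_finite_net cK eps_gt0.
exists k, c, p; split.
- by have [i _] := pK c Kc; apply: leq_ltn_trans (ltn_ord i).
- move=> i; apply: le_trans rad_gamma.
  by apply: dist_le_2rad => //; apply: compact_bounded.
- by move=> f /pK [i fi]; exists i; apply: ltW.
Qed.

End LipschitzWidth.

Theorem corollary4p3 (R : realType) (X : completeNormedModType R)
  (K : set X) (gamma : R) :
  compact K -> 2 * set_rad K <= gamma ->
  lip_width gamma K @ \oo --> (0 : R).
Proof.
move=> cK rad_gamma; apply/cvgrPdist_le => eps eps_gt0.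
have [k [c [p [k_gt0 p_near_c Kp]]]] := compact_affine_net cK rad_gamma eps_gt0.
exists k => // n /= kn; rewrite sub0r normrN ger0_norm ?lip_width_ge0 //.
have k_le_n : (1 <= k <= n)%N by rewrite k_gt0 kn.
apply: le_trans (lip_width_le_fixed gamma K k_le_n (l1_norm_is_norm R k)) _.
exact: fixed_lip_width_l1_le (ltW eps_gt0) p_near_c Kp.
Qed.
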